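(* Let $q=2^n$ with $n\ge 1$, and let $\mathbb{K}=\mathbb{F}_q(Y)$ where $Y$ is transcendental over $\mathbb{F}_q$. If $k>0$ is odd, then the polynomial $G(X)=\prod_{w\in\mathbb{F}_q^\times}\bigl(D_k(wX)-Y\bigr)\in\mathbb{K}[X]$ has no repeated roots in an algebraic closure $\overline{\mathbb{K}}$ of $\mathbb{K}$.
   Context: The $k$th Dickson polynomial $D_k(x)\in\mathbb{Z}[x]$ is defined by $D_0(x)=2$, $D_1(x)=x$, and $D_k(x)=xD_{k-1}(x)-D_{k-2}(x)$ for $k\ge 2$; equivalently it satisfies $D_k(u+1/u)=u^k+u^{-k}$. Here $D_k$ is regarded as a polynomial over $\mathbb{F}_q$ via reduction of its integer coefficients modulo $2$. *)

From HB Require Import structures.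
From mathcomp Require Import all_boot all_order all_algebra all_field.
Set Implicit Arguments. Unset Strict Implicit. Unset Printing Implicit Defensive.
Import GRing.Theory.
Local Open Scope ring_scope.

(* Dickson polynomials over Z: D_0 = 2, D_1 = X, D_k = X D_{k-1} - D_{k-2}.
   dickson_pair k = (D_k, D_{k+1}). *)
Fixpoint dickson_pair (k : nat) : {poly int} * {poly int} :=
  match k with
  | 0%N => (2%:P, 'X)
  | k'.+1 => let: (a, b) := dickson_pair k' in (b, 'X * b - a)
  end.

Definition dickson (k : nat) : {poly int} := (dickson_pair k).1.

Definition dicksonR (R : nzRingType) (k : nat) : {poly R} :=
  map_poly (fun z : int => z%:~R) (dickson k).

Definition ratfun (F : fieldType) := {fraction {poly F}}.

Definition ratY (F : fieldType) : ratfun F := tofrac 'X.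

Definition ratC (F : fieldType) (a : F) : ratfun F := tofrac (a%:P).

Definition dicksonG (F : finFieldType) (k : nat) : {poly ratfun F} :=
  \prod_(w : F | w != 0)
     ((dicksonR (ratfun F) k \Po (ratC w *: 'X)) - (ratY F)%:P).

From HB Require Import structures.
From mathcomp Require Import all_boot all_order all_algebra all_field.
Set Implicit Arguments. Unset Strict Implicit. Unset Printing Implicit Defensive.
Import GRing.Theory.
Local Open Scope ring_scope.

(* In characteristic 2 and for odd k, D_k only has monomials of odd degree, so
   X D_k' = D_k.  At a root x of D_k(cX) - Y this gives x (D_k(cX))'(x) = Y != 0,
   so every factor of G has simple roots.  Two factors with w != v cannot share a
   root x: x would then be a root of the nonzero polynomial D_k(wX) - D_k(vX)
   over F_q (its X-coefficient is w - v), hence algebraic over F_q, and so would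
   Y = D_k(wx), although Y is transcendental. *)

Lemma dickson_pair_snd k : (dickson_pair k).2 = dickson k.+1.
Proof. by rewrite /dickson /=; case: (dickson_pair k). Qed.

Lemma dickson_rec k : dickson k.+2 = 'X * dickson k.+1 - dickson k.
Proof. by rewrite -!dickson_pair_snd /dickson /=; case: (dickson_pair k). Qed.

Section DicksonRing.
Variable R : nzRingType.

Lemma dicksonR0 : dicksonR R 0 = 2%:P.
Proof. by rewrite /dicksonR /dickson /= map_polyC. Qed.

Lemma dicksonR1 : dicksonR R 1 = 'X.
Proof. by rewrite /dicksonR /dickson /= map_polyX. Qed.

Lemma dicksonR_rec k : dicksonR R k.+2 = 'X * dicksonR R k.+1 - dicksonR R k.
Proof. by rewrite /dicksonR dickson_rec rmorphB rmorphM /= map_polyX. Qed.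

Lemma map_dicksonR (S : nzRingType) (g : {rmorphism R -> S}) k :
  map_poly g (dicksonR R k) = dicksonR S k.
Proof.
by rewrite /dicksonR -map_poly_comp; apply: eq_map_poly => z /=; rewrite rmorph_int.
Qed.

Hypothesis pcharR2 : 2 \in [pchar R].

Lemma coef_dicksonR_parity k i : odd i != odd k -> (dicksonR R k)`_i = 0.
Proof.
elim/ltn_ind: k i => -[|[|k]] IH i.
- by rewrite dicksonR0 coefC pcharf0 // if_same.
- by rewrite dicksonR1 coefX; case: i => [|[|i]] /=; rewrite ?mulr0n.
rewrite dicksonR_rec coefB coefXM; case: i => [|i] /=; rewrite negbK => odd_i.
  by rewrite (IH k) ?subr0.
rewrite (IH k.+1) ?(IH k) ?subr0 //=.
by move: odd_i; case: (odd i); case: (odd k).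
Qed.

Lemma coef0_dicksonR k : (dicksonR R k)`_0 = 0.
Proof.
elim/ltn_ind: k => -[|[|k]] IH.
- by rewrite dicksonR0 coefC pcharf0.
- by rewrite dicksonR1 coefX.
by rewrite dicksonR_rec coefB coefXM IH ?subr0.
Qed.

Lemma coef1_dicksonR k : (dicksonR R k)`_1 = (odd k)%:R.
Proof.
elim/ltn_ind: k => -[|[|k]] IH.
- by rewrite dicksonR0 coefC.
- by rewrite dicksonR1 coefX.
by rewrite dicksonR_rec coefB coefXM /= coef0_dicksonR IH // sub0r negbK oppr_pchar2.
Qed.

Lemma mulX_deriv_dicksonR k : odd k -> 'X * (dicksonR R k)^`() = dicksonR R k.
Proof.
move=> odd_k; apply/polyP => -[|i]; rewrite coefXM /=.
  by rewrite coef0_dicksonR.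
rewrite coef_deriv -mulr_natr -(GRing.natr_mod_pchar pcharR2) modn2 /=.
by case odd_i: (odd i); rewrite ?mulr1 // mulr0 coef_dicksonR_parity //= odd_i odd_k.
Qed.

End DicksonRing.

Lemma algebraic_horner_map (F E : fieldType) (g : {rmorphism F -> E}) p u :
  algebraicOver g u -> algebraicOver g (map_poly g p).[u].
Proof.
move/integral_algebraic=> int_u; apply/integral_algebraic/integral_horner => //.
by apply/integral_poly => i; rewrite coef_map; apply: integral_id.
Qed.

Lemma ratY_transcendental (F L : fieldType) (f : {rmorphism ratfun F -> L}) :
  ~ algebraicOver (f \o @tofrac _ \o polyC) (f (ratY F)).
Proof.
case=> r nz_r /rootP.
have -> : map_poly (f \o @tofrac _ \o polyC) r
    = map_poly f (map_poly (@tofrac _) (map_poly polyC r)).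
  by rewrite -!map_poly_comp.
rewrite /ratY !horner_map /= -[(map_poly polyC r).['X]]/(r \Po 'X) comp_polyXr.
by move/eqP; rewrite fmorph_eq0 tofrac_eq0 (negPf nz_r).
Qed.

Lemma ndvdp_XsubC_sq_prod (R : fieldType) (I : finType) (P : pred I)
    (p : I -> {poly R}) (x : R) :
  (forall i, P i -> root (p i) x -> ~~ root (p i)^`() x) ->
  (forall i j, P i -> P j -> root (p i) x -> root (p j) x -> i = j) ->
  ~~ (('X - x%:P) ^+ 2 %| \prod_(i | P i) p i).
Proof.
move=> simple_roots disjoint_roots.
have [i /andP[Pi pix] | no_root] := pickP (fun i => P i && root (p i) x); last first.
  apply: contraFN (_ : root (\prod_(i | P i) p i) x = false) => [sq_dvd|].
    by rewrite -dvdp_XsubCl (dvdp_trans _ sq_dvd) // expr2 dvdp_mulr.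
  apply/negbTE; rewrite rootE horner_prod; apply/prodf_neq0 => j Pj.
  by have := no_root j; rewrite /= Pj => /negbT.
have [h def_pi] := factor_theorem _ _ pix.
have hx : h.[x] != 0.
  have := simple_roots i Pi pix; rewrite def_pi derivM derivXsubC mulr1 rootE.
  by rewrite !hornerE subrr mulr0 add0r.
have rest_x : (\prod_(j | P j && (j != i)) p j).[x] != 0.
  rewrite horner_prod; apply/prodf_neq0 => j /andP[Pj ji]; apply: contra ji => pjx.
  by rewrite (disjoint_roots j i).
rewrite (bigD1 i Pi) /= def_pi mulrAC mulrC expr2 dvdp_mul2l ?polyXsubC_eq0 //.
by rewrite dvdp_XsubCl rootE hornerM mulf_neq0.
Qed.

Definition dickson_factor {R : nzRingType} (k : nat) (c y : R) : {poly R} :=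
  (dicksonR R k \Po (c *: 'X)) - y%:P.

Lemma map_dickson_comp_scale (R S : nzRingType) (g : {rmorphism R -> S}) k c :
  map_poly g (dicksonR R k \Po (c *: 'X)) = dicksonR S k \Po (g c *: 'X).
Proof. by rewrite map_comp_poly map_polyZ map_polyX map_dicksonR. Qed.

Lemma map_dickson_factor (R S : nzRingType) (g : {rmorphism R -> S}) k c y :
  map_poly g (dickson_factor k c y) = dickson_factor k (g c) (g y).
Proof. by rewrite rmorphB /= map_dickson_comp_scale map_polyC. Qed.

Lemma horner_dickson_comp_scale (R : comNzRingType) k (c x : R) :
  (dicksonR R k \Po (c *: 'X)).[x] = (dicksonR R k).[c * x].
Proof. by rewrite horner_comp hornerZ hornerX. Qed.

Lemma root_dickson_factor (R : comNzRingType) k (c y x : R) :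
  root (dickson_factor k c y) x = ((dicksonR R k).[c * x] == y).
Proof.
by rewrite rootE hornerD hornerN hornerC horner_dickson_comp_scale subr_eq0.
Qed.

Section DicksonField.
Variables (L : fieldType) (k : nat).
Hypotheses (pcharL2 : 2 \in [pchar L]) (odd_k : odd k).
Local Notation D := (dicksonR L k).

Lemma deriv_dickson_comp_scale_at0 (c : L) : ((D \Po (c *: 'X))^`()).[0] = c.
Proof.
rewrite deriv_comp derivZ derivX hornerM horner_comp !hornerZ hornerX hornerC.
by rewrite mulr0 mulr1 horner_coef0 coef_deriv coef1_dicksonR // odd_k mul1r.
Qed.

Lemma dickson_comp_scale_inj (c d : L) :
  c != d -> D \Po (c *: 'X) != D \Po (d *: 'X).
Proof.
apply: contraNneq => eq_cd.
by rewrite -[c]deriv_dickson_comp_scale_at0 eq_cd deriv_dickson_comp_scale_at0.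
Qed.

Lemma dickson_factor_simple_root (c y x : L) :
  y != 0 -> root (dickson_factor k c y) x -> ~~ root (dickson_factor k c y)^`() x.
Proof.
move=> nz_y; rewrite root_dickson_factor => /eqP Dcx; apply: contra nz_y.
rewrite derivB derivC subr0 deriv_comp derivZ derivX rootE hornerM horner_comp.
rewrite !hornerZ hornerX hornerC mulr1 [_ * c]mulrC -Dcx => /eqP D'cx.
by rewrite -(mulX_deriv_dicksonR pcharL2 odd_k) hornerM hornerX mulrAC D'cx mul0r.
Qed.

End DicksonField.

Lemma dickson_factors_common_root_algebraic (F L : fieldType)
    (g : {rmorphism F -> L}) k (w v : F) (y x : L) :
  2 \in [pchar F] -> odd k -> w != v ->
  root (dickson_factor k (g w) y) x -> root (dickson_factor k (g v) y) x ->
  algebraicOver g y.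
Proof.
move=> pcharF2 odd_k neq_wv.
rewrite !root_dickson_factor -!horner_dickson_comp_scale -!map_dickson_comp_scale.
move=> /eqP Dw_x /eqP Dv_x; rewrite -Dw_x; apply: algebraic_horner_map.
exists ((dicksonR F k \Po (w *: 'X)) - (dicksonR F k \Po (v *: 'X))).
  by rewrite subr_eq0 dickson_comp_scale_inj.
by rewrite rmorphB rootE hornerD hornerN Dw_x Dv_x subrr.
Qed.

Theorem lemma2 (n : nat) (F : finFieldType) (k : nat) :
  (1 <= n)%N -> #|F| = (2 ^ n)%N -> odd k ->
  forall (L : closedFieldType) (f : {rmorphism ratfun F -> L}) (x : L),
    ~~ ((('X - x%:P) ^+ 2) %| map_poly f (dicksonG F k)).
Proof.
move=> _ cardF odd_k L f x.
have pcharF2 : 2 \in [pchar F] by apply: card_finPcharP cardF _.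
pose g : {rmorphism F -> L} := f \o @tofrac _ \o polyC.
have pcharL2 : 2 \in [pchar L] := rmorph_pchar g pcharF2.
pose y := f (ratY F).
have nz_y : y != 0 by rewrite fmorph_eq0 tofrac_eq0 polyX_eq0.
have -> : map_poly f (dicksonG F k)
    = \prod_(w : F | w != 0) dickson_factor k (g w) y.
  by rewrite rmorph_prod; apply: eq_bigr => w _; apply: map_dickson_factor.
apply: ndvdp_XsubC_sq_prod => [w _ | w v _ _ root_w root_v].
  exact: dickson_factor_simple_root.
have [// | neq_wv] := eqVneq w v; exfalso.
apply: (ratY_transcendental (f := f)).
exact: dickson_factors_common_root_algebraic pcharF2 odd_k neq_wv root_w root_v.
Qed.
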